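(* Let $\theta$ be a real-valued treatment-effect parameter, $\delta\in\mathbb{R}$ a clinical margin and $c\in(0,1)$. Let $\pi_{\mathrm{a}}$ (analysis prior) and $\pi_{\mathrm{d}}$ (design prior) be probability distributions on $\theta$ with $\Pr_{\mathrm{d}}(\theta\le\delta)>0$, and let data $\mathcal{D}$ have sampling distribution $f(\mathcal{D}\mid\theta)$. Define $\mathcal{S}(\mathcal{D};c)=\mathbb{I}\{\Pr_{\mathrm{a}}(\theta>\delta\mid\mathcal{D})>c\}$ with $\Pr_{\mathrm{a}}(\cdot\mid\mathcal{D})$ the posterior under $\pi_{\mathrm{a}}$, and the power function $\beta(\theta)=\Pr\{\mathcal{S}(\mathcal{D};c)=1\mid\theta\}$ (probability over $\mathcal{D}\sim f(\cdot\mid\theta)$). Assume $\beta(\theta)$ is strictly increasing in $\theta$. Let the frequentist Type I error rate be $\alpha(c)=\beta(\delta)$ and the Bayesian Type I error rate be $\alpha_B(c)=\int_{\theta\le\delta}\beta(\theta)\,\pi_{\mathrm{d}}(\theta\mid\theta\le\delta)\,d\theta$. Then $\alpha_B(c)\le\alpha(c)$, with equality if and only if $\pi_{\mathrm{d}}$ is a point mass at $\theta=\delta$.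
   Context: $\pi_{\mathrm{d}}(\theta\mid\theta\le\delta)$ denotes the design prior restricted to and renormalized on $\{\theta\le\delta\}$ (the integral is understood with respect to this conditional distribution in general). *)

From HB Require Import structures.
From mathcomp Require Import all_boot all_order all_algebra.
From mathcomp Require Import all_classical all_reals all_analysis.
Set Implicit Arguments. Unset Strict Implicit. Unset Printing Implicit Defensive.
Import Order.TTheory GRing.Theory Num.Theory.
Local Open Scope classical_set_scope.
Local Open Scope ring_scope.

(* Sampling model: data x in a measurable space X, with sampling density
   f theta x w.r.t. a reference measure mu on X. Priors are probability
   measures on R (Borel sets). *)

(* Posterior probability Pr_a(theta > delta | x) under analysis prior pia,
   by Bayes' formula (0 if the marginal likelihood vanishes). *)
Definition posterior_gt (R : realType) (pia : probability R R)
  (X : Type) (f : R -> X -> R) (delta : R) (x : X) : R :=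
  fine (\int[pia]_(t in [set` `]delta, +oo[]) (f t x)%:E) /
  fine (\int[pia]_(t in setT) (f t x)%:E).

Definition success_set (R : realType) (pia : probability R R)
  (X : Type) (f : R -> X -> R) (delta c : R) : set X :=
  [set x | c < posterior_gt pia f delta x].

Definition power (R : realType) (d : measure_display) (X : measurableType d)
  (mu : {measure set X -> \bar R}) (pia : probability R R)
  (f : R -> X -> R) (delta c : R) (theta : R) : R :=
  fine (\int[mu]_(x in success_set pia f delta c) (f theta x)%:E).

Definition alpha_freq (R : realType) (d : measure_display) (X : measurableType d)
  (mu : {measure set X -> \bar R}) (pia : probability R R)
  (f : R -> X -> R) (delta c : R) : R :=
  power mu pia f delta c delta.

Definition alpha_bayes (R : realType) (d : measure_display) (X : measurableType d)
  (mu : {measure set X -> \bar R}) (pia pid : probability R R)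
  (f : R -> X -> R) (delta c : R) : R :=
  fine (\int[pid]_(t in [set` `]-oo, delta]]) (power mu pia f delta c t)%:E) /
  fine (pid [set` `]-oo, delta]]).

Definition cond_le (R : realType) (pid : probability R R) (delta : R) (A : set R) : R :=
  fine (pid (A `&` [set` `]-oo, delta]])) / fine (pid [set` `]-oo, delta]]).

From HB Require Import structures.
From mathcomp Require Import all_boot all_order all_algebra.
From mathcomp Require Import all_classical all_reals all_analysis.
From mathcomp Require Import measurable_realfun.
Import Order.TTheory GRing.Theory Num.Theory.
Local Open Scope classical_set_scope.
Local Open Scope ring_scope.

(* Since the power function beta is increasing, beta <= beta delta on
   {theta <= delta}, so its average under the design prior restricted to that
   set is at most beta delta.  If the design prior charges {theta < delta}, it
   charges some {theta <= delta - e}, where beta <= beta (delta - e) < beta delta,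
   and the inequality is strict.  If it does not, the restricted design prior
   is the point mass at delta. *)

Lemma itvNyoEbigcup {R : realType} (x : R) :
  `]-oo, x[%classic = \bigcup_k `]-oo, x - k.+1%:R^-1]%classic.
Proof.
apply/seteqP; split => [y /=|y [k _ /=]]; rewrite !in_itv/=.
  move=> yx; exists (Num.truncn (x - y)^-1) => //=; rewrite in_itv/= lerBrDl addrC -lerBrDl.
  rewrite -[leRHS]invrK lef_pV2 ?posrE ?ltr0n ?invr_gt0 ?subr_gt0//.
  exact/ltW/truncnS_gt.
by move=> ykx; apply: le_lt_trans ykx _; rewrite ltrBlDr ltrDl.
Qed.

Lemma measure_itvNyo_gt0 {R : realType} (P : {measure set R -> \bar R}) (x : R) :
  (0 < P `]-oo, x[%classic)%E ->
  exists2 e : R, (0 < e)%R & (0 < P `]-oo, (x - e)%R]%classic)%E.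
Proof.
move=> Px.
suff [k Pk] : exists k : nat, (0 < P `]-oo, (x - k.+1%:R^-1)%R]%classic)%E.
  by exists k.+1%:R^-1; rewrite ?invr_gt0.
apply: contrapT => /forallNP Pk.
suff [M [mM M0 NM]] : P.-negligible `]-oo, x[%classic.
  by move: Px; rewrite ltNge -M0 le_measure ?inE.
rewrite itvNyoEbigcup; apply: negligible_bigcup => k.
exists `]-oo, x - k.+1%:R^-1]%classic; split => //.
by apply/eqP; rewrite -measure_le0 leNgt; exact/negP/Pk.
Qed.

Lemma measureI_itvNyc_null {R : realType} (P : {measure set R -> \bar R}) (x : R)
    (A : set R) : measurable A -> P `]-oo, x[%classic = 0%E ->
  P (A `&` `]-oo, x]%classic) = ((\1_A x)%:E * P `]-oo, x]%classic)%E.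
Proof.
move=> mA Px0.
have itvNycB B : ~ B x -> measurable B -> P (B `&` `]-oo, x]%classic) = 0%E.
  move=> Bx mB; apply: subset_measure0 Px0 => //; first exact: measurableI.
  move=> y [By] /=; rewrite !in_itv/= le_eqVlt => /orP[/eqP yx|//].
  by case: Bx; rewrite -yx.
have [Ax|Ax] := pselect (A x); last by rewrite indicE memNset // mul0e itvNycB.
rewrite indicE mem_set // mul1e [RHS](measureDI P _ mA) // -[LHS]add0e.
congr (_ + _)%E; last by rewrite setIC.
rewrite setDE setIC; apply/esym/itvNycB; [by move/(_ Ax) | exact: measurableC].
Qed.

Lemma ge0_integral_le_cst {d} {T : measurableType d} {R : realType}
    (mu : {measure set T -> \bar R}) (A : set T) (g : T -> R) (M : R) :
  measurable A -> measurable_fun A g -> (forall t, A t -> 0 <= g t <= M) ->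
  (\int[mu]_(t in A) (g t)%:E <= M%:E * mu A)%E.
Proof.
move=> mA mg gM; rewrite -integral_cst //; apply: ge0_le_integral => //.
- by move=> t /gM /andP[g0 _]; rewrite lee_fin.
- exact/measurable_EFinP.
- by move=> t /gM /andP[_ gleM]; rewrite lee_fin.
Qed.

Section nondecreasing_integrand.
Context {R : realType} (P : {measure set R -> \bar R}) (g : R -> R) (x : R).
Hypotheses (g_ge0 : forall t, 0 <= g t) (g_nd : nondecreasing_fun g).
Local Open Scope ereal_scope.

Lemma integral_le_ub (A : set R) (y : R) : measurable A ->
  (forall t, A t -> (t <= y)%R) -> \int[P]_(t in A) (g t)%:E <= (g y)%:E * P A.
Proof.
move=> mA Ay; apply: ge0_integral_le_cst => //.
  exact: nondecreasing_measurable.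
by move=> t /Ay ty; rewrite g_ge0 g_nd.
Qed.

Lemma integral_itvNyc_null : P `]-oo, x[%classic = 0 ->
  \int[P]_(t in `]-oo, x]%classic) (g t)%:E = (g x)%:E * P `]-oo, x]%classic.
Proof.
move=> Px0; rewrite -integral_cst //; apply: ae_eq_integral => //.
- by apply/measurable_EFinP; exact: nondecreasing_measurable.
- exists `]-oo, x[%classic; split => // t /= gtx; apply: contrapT => tx.
  apply: gtx; rewrite /= in_itv/= le_eqVlt => /orP[/eqP -> //|tltx].
  by case: tx; rewrite /= in_itv.
Qed.

End nondecreasing_integrand.

Lemma integral_itvNyc_lt {R : realType} (P : {finite_measure set R -> \bar R})
    (g : R -> R) (x : R) : (forall t, 0 <= g t) -> {homo g : s t / s < t} ->
  (0 < P `]-oo, x[%classic)%E ->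
  (\int[P]_(t in `]-oo, x]%classic) (g t)%:E < (g x)%:E * P `]-oo, x]%classic)%E.
Proof.
move=> g_ge0 g_inc /measure_itvNyo_gt0[e e_gt0 PE_gt0].
set D := `]-oo, x]%classic; set E := `]-oo, x - e]%classic.
have ED : E `<=` D.
  by move=> t; rewrite /E /D /= !in_itv/= => /le_trans; apply; rewrite gerBl ltW.
have mD : measurable D by exact: measurable_itv.
have mE : measurable E by exact: measurable_itv.
have g_nd := ltW_homo g_inc.
have mDE : measurable (D `\` E) by exact: measurableD.
have lt_int : (\int[P]_(t in E) (g t)%:E + \int[P]_(t in D `\` E) (g t)%:E <
               (g x)%:E * P E + (g x)%:E * P (D `\` E))%E.
  apply: (@le_lt_trans _ _ ((g (x - e))%:E * P E + (g x)%:E * P (D `\` E))%E).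
    apply: leeD; apply: integral_le_ub => //.
    by move=> t [+ _]; rewrite /D /= in_itv.
  apply: lte_leD => //; first by rewrite fin_numM ?fin_num_measure.
  by rewrite lte_pmul2r ?fin_num_measure ?lte_fin ?g_inc ?gtrBl.
have DE : D = E `|` D `\` E by rewrite setDUK.
have EDE0 : E `&` (D `\` E) = set0 by rewrite setDIK.
have PD : P D = (P E + P (D `\` E))%E by rewrite {1}DE measureU.
have intD : (\int[P]_(t in D) (g t)%:E =
    \int[P]_(t in E) (g t)%:E + \int[P]_(t in D `\` E) (g t)%:E)%E.
  rewrite {1}DE; apply: ge0_integral_setU => //; last by rewrite disj_set2E EDE0.
  - by rewrite -DE; apply/measurable_EFinP; exact: nondecreasing_measurable.
  - by move=> t _; rewrite lee_fin.
by rewrite intD PD ge0_muleDr.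
Qed.

Lemma cond_le_dirac {R : realType} (P : probability R R) (x : R) :
  (0 < P `]-oo, x]%classic)%E ->
  P `]-oo, x[%classic = 0%E <->
  forall A, measurable A -> cond_le P x A = \1_A x.
Proof.
move=> PD_gt0; have PD_neq0 : fine (P `]-oo, x]%classic) != 0.
  by rewrite fine_eq0 ?fin_num_measure // gt_eqF.
split => [Px0 A mA | condP].
  by rewrite /cond_le measureI_itvNyc_null // fineM ?fin_num_measure // mulfK.
have := condP _ (measurable_itv `]-oo, x[).
rewrite /cond_le setIidl; last by move=> t; rewrite /= !in_itv/= => /ltW.
rewrite indicE memNset /=; last by rewrite in_itv/= ltxx.
move/eqP; rewrite mulf_eq0 invr_eq0 (negbTE PD_neq0) orbF fine_eq0 ?fin_num_measure //.
by move/eqP.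
Qed.

Theorem proposition2 (R : realType) (d : measure_display) (X : measurableType d)
  (mu : {measure set X -> \bar R}) (pia pid : probability R R)
  (f : R -> X -> R) (delta c : R) :
  0 < c < 1 ->
  (0 < pid [set` `]-oo, delta]])%E ->
  (forall theta x, 0 <= f theta x) ->
  (forall theta, measurable_fun setT (f theta)) ->
  (forall theta, (\int[mu]_(x in setT) (f theta x)%:E = 1)%E) ->
  {homo power mu pia f delta c : t1 t2 / t1 < t2} ->
  alpha_bayes mu pia pid f delta c <= alpha_freq mu pia f delta c /\
  (alpha_bayes mu pia pid f delta c = alpha_freq mu pia f delta c <->
   forall A : set R, measurable A -> cond_le pid delta A = \1_A delta).
Proof.
move=> _ PD_gt0 f_ge0 _ _ power_inc.
rewrite /alpha_bayes /alpha_freq; set beta := power mu pia f delta c.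
have beta_ge0 t : 0 <= beta t.
  by apply: fine_ge0; apply: integral_ge0 => x _; rewrite lee_fin.
have beta_nd := ltW_homo power_inc.
set D := `]-oo, delta]%classic; set I := (\int[pid]_(t in D) (beta t)%:E)%E.
have mD : measurable D by exact: measurable_itv.
have PD_fin : pid D = (fine (pid D))%:E by rewrite fineK ?fin_num_measure.
have fine_PD_gt0 : 0 < fine (pid D) by rewrite -lte_fin -PD_fin.
have I_le : (I <= (beta delta)%:E * pid D)%E.
  by apply: integral_le_ub => // t; rewrite /D /= in_itv.
have I_fin : I = (fine I)%:E.
  rewrite fineK // ge0_fin_numE ?integral_ge0 //; last by move=> t _; rewrite lee_fin.
  by apply: le_lt_trans I_le _; rewrite PD_fin -EFinM ltey.
split; first by rewrite ler_pdivrMr // -lee_fin EFinM -I_fin -PD_fin.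
apply: (iff_trans _ (cond_le_dirac _ _ PD_gt0)); split => [alpha_eq | Px0]; last first.
  by rewrite /I integral_itvNyc_null // fineM ?fin_num_measure // mulfK ?gt_eqF.
have I_eq : I = ((beta delta)%:E * pid D)%E.
  by rewrite I_fin PD_fin -EFinM -alpha_eq divfK ?gt_eqF.
apply/eqP; rewrite -measure_le0 leNgt; apply/negP.
move=> /(integral_itvNyc_lt pid beta delta beta_ge0 power_inc).
by rewrite lt_neqAle => /andP[/eqP I_neq _]; exact: I_neq I_eq.
Qed.
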